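(* Let $N\ge 3$ be an integer, let $\Delta\theta^*=2\pi/N$, and let $P\neq 0$ be a real constant. Let $(\theta_k)_{k\ge1}$ and $(\omega_k)_{k\ge1}$ be real sequences with $\omega_k>0$ for all $k$, satisfying for every $k\ge 1$ $$\theta_{k+1}=\theta_k+\Delta\theta^*,\qquad \omega_{k+1}-\omega_k=P\sin\theta_k\left[\frac{1}{\omega_k}+\frac{1}{\omega_{k+1}}\right],$$ and the assumption $\omega_k^2>|P|$ for every $k\ge1$. If $\theta_1=0$, then the solution is periodic with period $N$: for every $k\ge 1$, $\theta_{k+N}=\theta_k+2\pi$ (so $\theta_{k+N}\equiv\theta_k \pmod{2\pi}$) and $\omega_{k+N}=\omega_k$; in particular $\omega_{N+1}=\omega_1$.
   Context: This is the ''discrete zero dynamics'' of a devil-stick with parameter $\phi=\pm\pi/2$; in the paper $P=\frac{g(\Delta\theta^* )^2}{2R\sin(\Delta\theta^* )}$ if $\phi=-\pi/2$ and $P=-\frac{g(\Delta\theta^* )^2}{2R\sin(\Delta\theta^* )}$ if $\phi=\pi/2$, where $g>0$ (gravity) and $R>0$ are constants. The hypothesis $\omega_k^2>|P|$ for all $k$ is the paper's Assumption 1. *)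

From Stdlib Require Import Reals.
Open Scope R_scope.

(* A step of the recursion, [b - a = P s (1/a + 1/b)], determines [b] from [a]
   as soon as [a b > |P|]: subtracting two such steps gives
   [(b - c) (b c + P s) = 0] with [b c + P s > 0].  The recursion is also
   reversible (swapping [a] and [b] flips the sign of [s]).  With [theta_1 = 0]
   the sines satisfy [sin theta_a = - sin theta_b] whenever [a + b = N + 2], so
   the reversed sequence [k |-> omega (N + 3 - k)] solves the same recursion,
   and uniqueness gives [omega_k = omega_(N+3-k)]; in particular
   [omega_1 = omega_(N+2) = omega_(N+1)], the last step having [sin theta_(N+1) = 0].
   Since the sines are [N]-periodic, the shifted sequence [omega_(k+N)] solves
   the recursion with the same initial value, hence equals [omega_k]. *)

From Stdlib Require Import Reals Lra Lia Psatz.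
Open Scope R_scope.

Section Step.

Variable P : R.

Definition step (s a b : R) : Prop := b - a = P * s * (/ a + / b).

Definition admissible (x : R) : Prop := 0 < x /\ x ^ 2 > Rabs P.

Lemma step_reverse (s a b : R) : step s a b -> step (- s) b a.
Proof. unfold step; intros E; lra. Qed.

Lemma step_0 (a b : R) : step 0 a b -> b = a.
Proof. unfold step; intros E; lra. Qed.

Lemma step_unique (s a b c : R) :
  Rabs s <= 1 -> admissible b -> admissible c ->
  step s a b -> step s a c -> b = c.
Proof.
  unfold step, admissible; intros Hs [Hb HbP] [Hc HcP] Eb Ec.
  assert (Hfactor : (b - c) * (b * c + P * s) = 0).
  { assert (Ediff : b - c = P * s * (/ b - / c)) by lra.
    replace ((b - c) * (b * c + P * s)) with ((b - c) * (b * c) + P * s * (b - c)) by ring.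
    rewrite Ediff at 1; field; lra. }
  assert (HbcP : b * c > Rabs P) by (pose proof (Rabs_pos P); nra).
  assert (HPs : Rabs (P * s) <= Rabs P)
    by (rewrite Rabs_mult; pose proof (Rabs_pos P); nra).
  pose proof (Rle_abs (- (P * s))) as HPs'; rewrite Rabs_Ropp in HPs'.
  apply Rmult_integral in Hfactor; destruct Hfactor; lra.
Qed.

Definition solution (s w : nat -> R) : Prop :=
  forall k, (1 <= k)%nat -> step (s k) (w k) (w (S k)).

Definition admissible_seq (w : nat -> R) : Prop :=
  forall k, (1 <= k)%nat -> admissible (w k).

Variable s : nat -> R.
Hypothesis s_bounded : forall k, Rabs (s k) <= 1.

Lemma solution_unique (w v : nat -> R) :
  solution s w -> solution s v -> admissible_seq w -> admissible_seq v ->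
  w 1%nat = v 1%nat -> forall k, (1 <= k)%nat -> w k = v k.
Proof.
  intros Hw Hv Aw Av E1 k Hk; induction Hk as [|k Hk IH]; [exact E1|].
  apply (step_unique (s k) (w k)); [ apply s_bounded | apply Aw; lia | apply Av; lia
    | apply Hw, Hk | rewrite IH; apply Hv, Hk ].
Qed.

Lemma solution_mirror (M : nat) (w : nat -> R) :
  solution s w -> admissible_seq w ->
  (forall a b, (1 <= a)%nat -> (1 <= b)%nat -> (a + b = M)%nat -> s b = - s a) ->
  forall d i, (1 <= i)%nat -> (2 * i + d = M + 1)%nat -> w i = w (i + d)%nat.
Proof.
  intros Hw Aw Hs.
  (* Outward from the centre, two indices at a time; for [d = 1] the central
     step has [s i = - s i = 0]. *)
  apply (Nat.pair_induction
    (fun d => forall i, (1 <= i)%nat -> (2 * i + d = M + 1)%nat -> w i = w (i + d)%nat)).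
  - intros x y ->; reflexivity.
  - intros i _ _; rewrite Nat.add_0_r; reflexivity.
  - intros i Hi Hi2.
    assert (Hsi : s i = 0) by (pose proof (Hs i i Hi Hi ltac:(lia)); lra).
    pose proof (Hw i Hi) as E; rewrite Hsi in E.
    replace (i + 1)%nat with (S i) by lia; symmetry; exact (step_0 _ _ E).
  - intros d IH _ i Hi Hi2.
    set (j := (i + S d)%nat).
    assert (Hmid : w (S i) = w j) by (unfold j; rewrite (IH (S i)) by lia; f_equal; lia).
    assert (Hback : step (s j) (w j) (w i)).
    { rewrite (Hs i j Hi ltac:(unfold j; lia) ltac:(unfold j; lia)), <- Hmid.
      apply step_reverse, Hw, Hi. }
    replace (i + S (S d))%nat with (S j) by (unfold j; lia).
    apply (step_unique (s j) (w j)); [ apply s_bounded | apply Aw; lia | apply Aw; unfold j; lia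
      | exact Hback | apply Hw; unfold j; lia ].
Qed.

End Step.

Section Progression.

Variables (N : nat) (theta : nat -> R).
Hypothesis N_pos : (1 <= N)%nat.
Hypothesis theta_1 : theta 1%nat = 0.
Hypothesis theta_S : forall k, (1 <= k)%nat -> theta (S k) = theta k + 2 * PI / INR N.

Lemma theta_closed_form (m : nat) : theta (S m) = INR m * (2 * PI / INR N).
Proof.
  induction m as [|m IH].
  - rewrite theta_1; simpl; ring.
  - rewrite theta_S, IH, S_INR by lia; ring.
Qed.

Lemma theta_add_period (k : nat) : (1 <= k)%nat -> theta (k + N)%nat = theta k + 2 * PI.
Proof.
  assert (HN : INR N <> 0) by (apply not_0_INR; lia).
  destruct k as [|m]; [lia|]; intros _.
  replace (S m + N)%nat with (S (m + N)) by lia.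
  rewrite !theta_closed_form, plus_INR; field; exact HN.
Qed.

Lemma sin_theta_add_period (k : nat) :
  (1 <= k)%nat -> sin (theta (k + N)%nat) = sin (theta k).
Proof.
  intros Hk; rewrite theta_add_period, sin_plus, sin_2PI, cos_2PI by exact Hk; ring.
Qed.

Lemma sin_theta_reflect (a b : nat) : (1 <= a)%nat -> (1 <= b)%nat ->
  (a + b = N + 2)%nat -> sin (theta b) = - sin (theta a).
Proof.
  assert (HN : INR N <> 0) by (apply not_0_INR; lia).
  destruct a as [|a], b as [|b]; intros Ha Hb Hab; try lia.
  replace (theta (S b)) with (2 * PI - theta (S a)).
  - rewrite sin_minus, sin_2PI, cos_2PI; ring.
  - rewrite !theta_closed_form; replace (INR b) with (INR N - INR a)
      by (replace b with (N - a)%nat by lia; rewrite minus_INR by lia; ring).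
    field; exact HN.
Qed.

End Progression.

Theorem lemma1 (N : nat) (P : R) (theta omega : nat -> R) :
  (3 <= N)%nat ->
  P <> 0 ->
  (forall k : nat, (1 <= k)%nat -> 0 < omega k) ->
  (forall k : nat, (1 <= k)%nat ->
     theta (S k) = theta k + 2 * PI / INR N) ->
  (forall k : nat, (1 <= k)%nat ->
     omega (S k) - omega k = P * sin (theta k) * (/ omega k + / omega (S k))) ->
  (forall k : nat, (1 <= k)%nat -> (omega k)^2 > Rabs P) ->
  theta 1%nat = 0 ->
  forall k : nat, (1 <= k)%nat ->
    theta (k + N)%nat = theta k + 2 * PI /\ omega (k + N)%nat = omega k.
Proof.
  intros HN _ Hpos Hth Hom Hsq Hth1.
  set (s k := sin (theta k)).
  assert (HN1 : (1 <= N)%nat) by lia.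
  assert (Hbound : forall k, Rabs (s k) <= 1) by (intro; apply Rabs_le, SIN_bound).
  assert (Hadm : admissible_seq P omega) by (split; auto).
  assert (Hw1 : omega (N + 1)%nat = omega 1%nat).
  { assert (Hs0 : s (N + 1)%nat = 0).
    { unfold s; rewrite (sin_theta_reflect N theta HN1 Hth1 Hth 1%nat) by lia.
      rewrite Hth1, sin_0; ring. }
    pose proof (Hom (N + 1)%nat ltac:(lia)) as E; fold (s (N + 1)%nat) in E; rewrite Hs0 in E.
    rewrite <- (step_0 _ _ _ E).
    replace (S (N + 1)) with (1 + (N + 1))%nat by lia.
    symmetry; apply (solution_mirror P s Hbound (N + 2)); auto; try lia.
    intros a b Ha Hb Hab; exact (sin_theta_reflect N theta HN1 Hth1 Hth a b Ha Hb Hab). }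
  intros k Hk; split; [exact (theta_add_period N theta HN1 Hth1 Hth k Hk)|].
  apply (solution_unique P s Hbound (fun k => omega (k + N)%nat)); auto.
  - intros j Hj; unfold s.
    rewrite <- (sin_theta_add_period N theta HN1 Hth1 Hth j Hj).
    apply Hom; lia.
  - intros j Hj; split; [apply Hpos | apply Hsq]; lia.
  - rewrite Nat.add_comm; exact Hw1.
Qed.
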